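(* Let $G=(V,E)$ be a simple connected graph with $N\ge 2$ nodes. For the Mellin transform with parameter $s>0$ let $w_{ij}=d_{ij}^{-s}$ for all pairs $i\neq j$, and for the Laplace transform with parameter $\lambda>0$ let $w_{ij}=e^{-\lambda d_{ij}}$ if $d_{ij}>1$ and $w_{ij}=1$ if $(i,j)\in E$. Let $\tilde{L}_\tau(G,w)$ be the corresponding transformed $d$-path Laplacian, i.e. the weighted Laplacian with off-diagonal entries $-w_{ij}$ and diagonal entries $\sum_{j\neq i}w_{ij}$ (equivalently $\sum_{d=1}^{d_{max}}d^{-s}L_d$ in the Mellin case and $L+\sum_{d=2}^{d_{max}}e^{-\lambda d}L_d$ in the Laplace case), and let $\lambda_2(G,w)$ and $\lambda_N(G,w)$ be its second smallest and largest eigenvalues. If $s'<s$ (Mellin case) or $\lambda'<\lambda$ (Laplace case), and $w'$ denotes the weights with parameter $s'$ (resp. $\lambda'$), then $\lambda_2(G,w')\ge\lambda_2(G,w)$ and $\lambda_N(G,w')\ge\lambda_N(G,w)$. That is, $\lambda_2(G,w)$ and $\lambda_N(G,w)$ are non-increasing in $s$ (resp. $\lambda$).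
   Context: $d_{ij}$ is the shortest-path distance between nodes $i,j$ in $G$ and $d_{max}$ the diameter. $L$ is the usual graph Laplacian. For $1\le d\le d_{max}$, $L_d$ is the $N\times N$ matrix with $(L_d)_{ij}=-1$ if $i\ne j$ and $d_{ij}=d$, $0$ for other off-diagonal entries, and $(L_d)_{ii}$ equal to the number of nodes at distance $d$ from $i$. Eigenvalues are ordered $0=\lambda_1\le\lambda_2\le\cdots\le\lambda_N$. *)

From HB Require Import structures.
From mathcomp Require Import all_boot all_order all_algebra.
From mathcomp Require Import all_classical all_reals all_analysis.
Set Implicit Arguments. Unset Strict Implicit. Unset Printing Implicit Defensive.
Import Order.TTheory GRing.Theory Num.Theory.
Local Open Scope ring_scope.

Definition simple_graph (N : nat) (e : rel 'I_N) : Prop :=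
  symmetric e /\ irreflexive e.

Definition connected_graph (N : nat) (e : rel 'I_N) : Prop :=
  forall x y : 'I_N, connect e x y.

Definition walkb (N : nat) (e : rel 'I_N) (k : nat) (x y : 'I_N) : bool :=
  [exists p : k.-tuple 'I_N, path e x p && (last x p == y)].

(* shortest-path distance d_ij: the least k < N such that a k-edge walk
   from x to y exists (in a connected graph such k always exists). *)
Definition gdist (N : nat) (e : rel 'I_N) (x y : 'I_N) : nat :=
  find (fun k => walkb e k x y) (iota 0 N).

Definition wlaplacian (R : ringType) (N : nat) (w : 'I_N -> 'I_N -> R)
  : 'M[R]_N :=
  \matrix_(i, j) if i == j then \sum_(k | k != i) w i k else - w i j.

Definition mellin_w (R : realType) (N : nat) (e : rel 'I_N) (s : R)
  (i j : 'I_N) : R := ((gdist e i j)%:R) `^ (- s).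

Definition laplace_w (R : realType) (N : nat) (e : rel 'I_N) (l : R)
  (i j : 'I_N) : R :=
  if e i j then 1 else expR (- (l * (gdist e i j)%:R)).

(* s is the list of eigenvalues of A (with multiplicity) in nondecreasing
   order: sorted and char_poly A = prod_(x <- s) (X - x). For a real
   symmetric matrix such a list exists and is unique. *)
Definition sorted_eigenvalues (R : realType) (N : nat) (A : 'M[R]_N)
  (s : seq R) : Prop :=
  sorted <=%R s /\ char_poly A = \prod_(x <- s) ('X - x%:P).

From mathcomp Require Import all_boot all_order all_algebra.
From mathcomp Require Import all_classical all_reals all_analysis.
From mathcomp Require Import spectral complex ring zify.
Set Implicit Arguments. Unset Strict Implicit. Unset Printing Implicit Defensive.
Import Order.TTheory GRing.Theory Num.Theory.
Local Open Scope ring_scope.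
Local Open Scope sesquilinear_scope.

(* Lowering the parameter raises every weight, and the weighted Laplacian is
   additive in its weights, so L(w') = L(w) + L(w' - w) with L(w' - w) a
   Laplacian with nonnegative symmetric weights, hence positive semidefinite.
   Weyl monotonicity then gives lambda_k(L(w)) <= lambda_k(L(w')) for every k.
   It is proved by a dimension count after diagonalizing both matrices (real
   symmetric, hence normal over R[i]) by unitaries: if fewer eigenvalues of
   L(w) lie below mu than eigenvalues of L(w') lie at or below nu, some vector
   v <> 0 in the span of the latter eigenvectors is orthogonal to the former,
   and then mu |v|^2 <= v* L(w) v <= v* L(w') v <= nu |v|^2. *)

Lemma char_poly_conj (F : comUnitRingType) n (P A : 'M[F]_n) : P \in unitmx ->
  char_poly (invmx P *m A *m P) = char_poly A.
Proof.
move=> Pu; rewrite /char_poly.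
pose Pp := map_mx polyC P; pose Pi := map_mx polyC (invmx P).
have PiP : Pi *m Pp = 1%:M by rewrite -map_mxM mulVmx // map_mx1.
have -> : char_poly_mx (invmx P *m A *m P) = Pi *m char_poly_mx A *m Pp.
  rewrite /char_poly_mx mulmxBr mulmxBl !map_mxM mul_mx_scalar -scalemxAl PiP.
  by rewrite scalemx1.
by rewrite !det_mulmx mulrAC -det_mulmx PiP det1 mul1r.
Qed.

Section SortedCount.
Context {disp : Order.disp_t} {T : orderType disp}.

Lemma count_lt_nth_le (x0 : T) s k :
  sorted <=%O s -> (count (< nth x0 s k)%O s <= k)%N.
Proof.
by move=> ss; rewrite leqNgt; apply/negP => /(nth_count_lt x0 ss); rewrite ltxx.
Qed.

Lemma count_le_nth_gt (x0 : T) s k : sorted <=%O s -> (k < size s)%N ->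
  (k < count (<= nth x0 s k)%O s)%N.
Proof.
move=> ss ks; rewrite ltnNge; apply/negP => ck.
by have := nth_count_gt x0 ss (introT andP (conj ck ks)); rewrite ltxx.
Qed.

End SortedCount.

Section QuadraticForm.
Variable C : numClosedFieldType.

Definition qform n (A : 'M[C]_n) (v : 'rV[C]_n) : C := (v *m A *m v^t*) 0 0.

Lemma qformD n (A B : 'M[C]_n) v : qform (A + B) v = qform A v + qform B v.
Proof. by rewrite /qform mulmxDr mulmxDl mxE. Qed.

Lemma qform1_gt0 n (v : 'rV[C]_n) : v != 0 -> 0 < qform 1%:M v.
Proof. by move=> /dotmx_is_dotmx; rewrite dotmxE /qform mulmx1. Qed.

Lemma qform_spectral n (P : 'M[C]_n) (d : 'rV[C]_n) v : P \is unitarymx ->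
  qform (invmx P *m diag_mx d *m P) v = \sum_i d 0 i * `|(v *m P^t*) 0 i| ^+ 2.
Proof.
move=> Pu; rewrite /qform invmx_unitary //.
have -> : v *m (P^t* *m diag_mx d *m P) *m v^t* =
   (v *m P^t*) *m diag_mx d *m (v *m P^t*)^t*.
  by rewrite trmx_mul map_mxM trmxCK !mulmxA.
rewrite mul_mx_diag !mxE; apply: eq_bigr => i _.
by rewrite !mxE normCK mulrCA mulrA.
Qed.

Lemma qform1_unitary n (P : 'M[C]_n) v : P \is unitarymx ->
  qform 1%:M v = \sum_i `|(v *m P^t*) 0 i| ^+ 2.
Proof.
move=> Pu; have -> : (1%:M : 'M[C]_n) = invmx P *m diag_mx (const_mx 1) *m P.
  by rewrite diag_const_mx mulmx1 mulVmx // unitarymx_unit.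
by rewrite qform_spectral //; apply: eq_bigr => i _; rewrite mxE mul1r.
Qed.

Lemma qform_spectral_ge n (P : 'M[C]_n) (d : 'rV[C]_n) v (mu : C) :
  P \is unitarymx -> (forall i, d 0 i \is Num.real) -> mu \is Num.real ->
  (forall i, d 0 i < mu -> (v *m P^t*) 0 i = 0) ->
  mu * qform 1%:M v <= qform (invmx P *m diag_mx d *m P) v.
Proof.
move=> Pu dr mur vd; rewrite qform_spectral // (qform1_unitary _ Pu) mulr_sumr.
apply: ler_sum => i _; have [/vd ->|] := boolP (d 0 i < mu).
  by rewrite normr0 expr0n !mulr0.
by rewrite -real_leNgt // => le; apply: ler_wpM2r.
Qed.

Lemma qform_spectral_le n (P : 'M[C]_n) (d : 'rV[C]_n) v (nu : C) :
  P \is unitarymx -> (forall i, ~~ (d 0 i <= nu) -> (v *m P^t*) 0 i = 0) ->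
  qform (invmx P *m diag_mx d *m P) v <= nu * qform 1%:M v.
Proof.
move=> Pu vd; rewrite qform_spectral // (qform1_unitary _ Pu) mulr_sumr.
apply: ler_sum => i _; have [le|/vd ->] := boolP (d 0 i <= nu).
  exact: ler_wpM2r.
by rewrite normr0 expr0n !mulr0.
Qed.

(* Coordinate [i] of [v *m P^t*] is the inner product of [v] with row [i] of
   [P], so [v] is a combination of the rows of [P'] indexed by [I] that is
   orthogonal to the rows of [P] indexed by [J]. *)
Lemma exists_rows_combination_orthogonal n (P P' : 'M[C]_n) (I J : {set 'I_n}) :
  P \is unitarymx -> P' \is unitarymx -> (#|J| < #|I|)%N ->
  exists2 v : 'rV[C]_n, v != 0 &
    (forall i, i \notin I -> (v *m P'^t*) 0 i = 0) /\
    (forall j, j \in J -> (v *m P^t*) 0 j = 0).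
Proof.
move=> Pu P'u JI.
pose U : 'M[C]_(#|I|, n) := \matrix_(k < #|I|) row (enum_val k) P'.
pose W : 'M[C]_(#|J|, n) := \matrix_(k < #|J|) row (enum_val k) P.
have UP' k i : (U *m P'^t*) k i = (enum_val k == i)%:R.
  have /unitarymxP/matrixP/(_ (enum_val k) i) := P'u.
  by rewrite !mxE => <-; apply: eq_bigr => l _; rewrite !mxE.
have Uu : U \is unitarymx.
  apply/unitarymxP/matrixP => k l; rewrite [RHS]mxE -(inj_eq enum_val_inj) -UP'.
  by rewrite !mxE; apply: eq_bigr => m _; rewrite !mxE.
pose K := kermx (W^t*).
have rK : (n - #|J| <= \rank K)%N.
  by rewrite mxrank_ker mxrank_map mxrank_tr leq_sub2l // rank_leq_row.
have : (0 < \rank (U :&: K)%MS)%N.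
  have := mxrank_sum_cap U K; have := rank_leq_col (U + K)%MS.
  by move: rK JI; rewrite (mxrank_unitary Uu); lia.
rewrite lt0n mxrank_eq0 => /rowV0Pn [v vUK vn0]; exists v => //; split.
  have [x ->] := submxP (submx_trans vUK (capmxSl _ _)) => i iI.
  rewrite -mulmxA mxE; apply: big1 => k _; rewrite UP'.
  by case: eqP => [ki|_]; [move: iI; rewrite -ki enum_valP | rewrite mulr0].
move=> j jJ; have /sub_kermxP/matrixP/(_ 0 (enum_rank_in jJ j)) :=
  submx_trans vUK (capmxSr _ _).
rewrite !mxE => vWj; rewrite -[RHS]vWj; apply: eq_bigr => m _.
by rewrite !mxE enum_rankK_in.
Qed.

Lemma spectral_threshold_le n (P P' : 'M[C]_n) (d d' : 'rV[C]_n) (mu nu : C) :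
  P \is unitarymx -> P' \is unitarymx ->
  (forall i, d 0 i \is Num.real) -> mu \is Num.real ->
  (forall v, qform (invmx P *m diag_mx d *m P) v <=
             qform (invmx P' *m diag_mx d' *m P') v) ->
  (#|[set i | (d 0 i < mu)%R]| < #|[set i | (d' 0 i <= nu)%R]|)%N ->
  mu <= nu.
Proof.
move=> Pu P'u dr mur le_qform.
case/(exists_rows_combination_orthogonal Pu P'u) => v vn0 [vI vJ].
rewrite -(ler_pM2r (qform1_gt0 vn0)).
apply: le_trans (qform_spectral_ge Pu dr mur _) _.
  by move=> i di; apply: vJ; rewrite inE.
apply: le_trans (le_qform v) (qform_spectral_le P'u _).
by move=> i dnu; apply: vI; rewrite inE.
Qed.

End QuadraticForm.

Section WeightedLaplacian.

Lemma wlaplacianE (R : nzRingType) n (w : 'I_n -> 'I_n -> R) i j :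
  wlaplacian w i j = if i == j then \sum_(k | k != i) w i k else - w i j.
Proof. by rewrite mxE. Qed.

Lemma tr_wlaplacian (R : nzRingType) n (w : 'I_n -> 'I_n -> R) :
  (forall i j, w i j = w j i) -> (wlaplacian w)^T = wlaplacian w.
Proof.
move=> ws; apply/matrixP => i j; rewrite !mxE eq_sym.
by case: eqP => [->|_] //; rewrite ws.
Qed.

Lemma wlaplacianB (R : nzRingType) n (w w' : 'I_n -> 'I_n -> R) :
  wlaplacian w' - wlaplacian w = wlaplacian (fun i j => w' i j - w i j).
Proof.
apply/matrixP => i j; rewrite !mxE; case: eqP => _; first by rewrite sumrB.
by rewrite opprB addrC opprK addrC.
Qed.

Lemma map_wlaplacian (R S : nzRingType) (f : {rmorphism R -> S}) n
    (w : 'I_n -> 'I_n -> R) :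
  map_mx f (wlaplacian w) = wlaplacian (fun i j => f (w i j)).
Proof.
apply/matrixP => i j; rewrite !mxE; case: eqP => _; last by rewrite rmorphN.
by rewrite rmorph_sum.
Qed.

Variable C : numClosedFieldType.

Lemma qform_wlaplacian n (u : 'I_n -> 'I_n -> C) v :
  qform (wlaplacian u) v =
  \sum_i \sum_j u i j * (v 0 i * (v 0 i)^* - v 0 i * (v 0 j)^*).
Proof.
rewrite /qform mxE; under eq_bigr do rewrite mxE mulr_suml.
rewrite exchange_big /=; apply: eq_bigr => i _.
rewrite (bigD1 i) //= [RHS](bigD1 i) //= subrr mulr0 add0r wlaplacianE eqxx.
have -> : \sum_(j | j != i) v 0 i * wlaplacian u i j * (v^t*) j 0 =
          \sum_(j | j != i) - (u i j * (v 0 i * (v 0 j)^*)).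
  apply: eq_bigr => j ji.
  by rewrite wlaplacianE !mxE eq_sym (negbTE ji); ring.
rewrite !mxE; under [RHS]eq_bigr do rewrite mulrBr.
rewrite sumrB sumrN mulr_sumr mulr_suml; congr (_ - _).
by apply: eq_bigr => j _; ring.
Qed.

(* Symmetrizing: [2 qform (wlaplacian u) v = sum_(i,j) u i j |v_i - v_j|^2]. *)
Lemma qform_wlaplacian_ge0 n (u : 'I_n -> 'I_n -> C) v :
  (forall i j, u i j = u j i) -> (forall i j, 0 <= u i j) ->
  0 <= qform (wlaplacian u) v.
Proof.
move=> us u_ge0; rewrite -(pmulrn_lge0 _ (isT : (0 < 2)%N)) mulr2n.
rewrite {1}qform_wlaplacian qform_wlaplacian [X in _ + X]exchange_big.
rewrite -big_split /=; apply: sumr_ge0 => i _; rewrite -big_split /=.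
apply: sumr_ge0 => j _; rewrite (us j i) -mulrDr.
have -> : v 0 i * (v 0 i)^* - v 0 i * (v 0 j)^* +
          (v 0 j * (v 0 j)^* - v 0 j * (v 0 i)^*) = `|v 0 i - v 0 j| ^+ 2.
  by rewrite normCK rmorphB /=; ring.
by rewrite mulr_ge0.
Qed.

End WeightedLaplacian.

Section RealSymmetric.
Variable R : rcfType.
Local Notation ofR := (real_complex R).

Lemma size_eigenvalues n (A : 'M[R]_n) ev :
  char_poly A = \prod_(x <- ev) ('X - x%:P) -> size ev = n.
Proof.
move=> /(congr1 (fun p : {poly R} => size p)).
by rewrite size_char_poly size_prod_XsubC => -[].
Qed.

Lemma symmetric_normalmx n (A : 'M[R]_n) :
  A^T = A -> map_mx ofR A \is normalmx.
Proof.
move=> At; have AtC : (map_mx ofR A)^t* = map_mx ofR A.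
  rewrite map_trmx At -map_mx_comp; apply: eq_map_mx => x /=; exact: conjc_real.
by apply/normalmxP; rewrite AtC.
Qed.

Lemma spectral_diag_perm_eigenvalues n (A : 'M[R]_n) ev :
  A^T = A -> char_poly A = \prod_(x <- ev) ('X - x%:P) ->
  perm_eq [seq ofR x | x <- ev]
          [seq spectral_diag (map_mx ofR A) 0 i | i <- enum 'I_n].
Proof.
move=> At cp; apply: prod_XsubC_eq.
have -> : \prod_(x <- [seq ofR x | x <- ev]) ('X - x%:P) =
          char_poly (map_mx ofR A).
  rewrite big_map -map_char_poly cp rmorph_prod.
  by apply: eq_bigr => x _; rewrite /= map_polyXsubC.
rewrite {1}(orthomx_spectralP (symmetric_normalmx At)).
rewrite char_poly_conj ?spectral_unit //.
rewrite char_poly_trig ?diag_mx_is_trig // big_map big_enum /=.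
by apply: eq_bigr => i _; rewrite mxE eqxx mulr1n.
Qed.

Lemma card_spectral_diag n (d : 'rV[R[i]]_n) ev (p : pred R[i]) :
  perm_eq [seq ofR x | x <- ev] [seq d 0 i | i <- enum 'I_n] ->
  #|[set i | p (d 0 i)]| = count (fun x => p (ofR x)) ev.
Proof.
move=> pe; rewrite cardsE cardE /enum_mem size_filter -enumT.
by rewrite -(count_map (fun i => d 0 i) p) -(permP pe) count_map.
Qed.

Lemma spectral_diag_real n (d : 'rV[R[i]]_n) ev :
  perm_eq [seq ofR x | x <- ev] [seq d 0 i | i <- enum 'I_n] ->
  forall i, d 0 i \is Num.real.
Proof.
move=> pe i.
have : d 0 i \in [seq d 0 i | i <- enum 'I_n] by rewrite map_f ?mem_enum.
by rewrite -(perm_mem pe) => /mapP [x _ ->]; apply/complex_realP; exists x.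
Qed.

Lemma eigenvalues_le n (A B : 'M[R]_n) ev ev' k :
  A^T = A -> B^T = B -> (forall v, 0 <= qform (map_mx ofR (B - A)) v) ->
  sorted <=%R ev -> char_poly A = \prod_(x <- ev) ('X - x%:P) ->
  sorted <=%R ev' -> char_poly B = \prod_(x <- ev') ('X - x%:P) ->
  (k < n)%N -> ev`_k <= ev'`_k.
Proof.
move=> At Bt psd sev cp sev' cp' kn.
have pe := spectral_diag_perm_eigenvalues At cp.
have pe' := spectral_diag_perm_eigenvalues Bt cp'.
rewrite -lecR.
apply: (spectral_threshold_le (d' := spectral_diag (map_mx ofR B))
  (spectral_unitarymx (map_mx ofR A)) (spectral_unitarymx (map_mx ofR B))
  (spectral_diag_real pe)).
- by apply/complex_realP; exists ev`_k.
- move=> v; rewrite -(orthomx_spectralP (symmetric_normalmx At)).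
  rewrite -(orthomx_spectralP (symmetric_normalmx Bt)).
  by rewrite -[B](subrK A) map_mxD qformD addrC lerDl.
rewrite (card_spectral_diag (fun x => x < ofR ev`_k) pe).
rewrite (card_spectral_diag (fun x => x <= ofR ev'`_k) pe').
under eq_count do rewrite ltcR.
under [X in (_ < X)%N]eq_count do rewrite lecR.
apply: leq_ltn_trans (count_lt_nth_le 0 k sev) (count_le_nth_gt 0 sev' _).
by rewrite (size_eigenvalues cp').
Qed.

Lemma wlaplacian_eigenvalues_le n (w w' : 'I_n -> 'I_n -> R) ev ev' k :
  (forall i j, w i j = w j i) -> (forall i j, w' i j = w' j i) ->
  (forall i j, w i j <= w' i j) ->
  sorted <=%R ev -> char_poly (wlaplacian w) = \prod_(x <- ev) ('X - x%:P) ->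
  sorted <=%R ev' -> char_poly (wlaplacian w') = \prod_(x <- ev') ('X - x%:P) ->
  (k < n)%N -> ev`_k <= ev'`_k.
Proof.
move=> ws ws' ww'; apply: eigenvalues_le; rewrite ?tr_wlaplacian // => v.
rewrite wlaplacianB map_wlaplacian; apply: qform_wlaplacian_ge0 => i j /=.
  by rewrite ws ws'.
by rewrite -(rmorph0 ofR) lecR subr_ge0.
Qed.

End RealSymmetric.

Section GraphDistance.
Variables (N : nat) (e : rel 'I_N).
Hypothesis e_sym : symmetric e.

Lemma walkb_sym k x y : walkb e k x y -> walkb e k y x.
Proof.
move=> /existsP [p /andP [pe /eqP lp]].
have sz : size (rev (belast x p)) == k.
  by rewrite size_rev size_belast size_tuple.
apply/existsP; exists (Tuple sz); apply/andP; split => /=.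
  by rewrite -lp rev_path (@eq_path _ _ e) // => a b /=; rewrite e_sym.
by move: lp; case: (tval p) => [|z q] /= <- //; rewrite rev_cons last_rcons.
Qed.

Lemma gdist_sym x y : gdist e x y = gdist e y x.
Proof. by apply: eq_find => k; apply/idP/idP; apply: walkb_sym. Qed.

Lemma mellin_w_sym (R : realType) (s : R) i j :
  mellin_w e s i j = mellin_w e s j i.
Proof. by rewrite /mellin_w gdist_sym. Qed.

Lemma laplace_w_sym (R : realType) (l : R) i j :
  laplace_w e l i j = laplace_w e l j i.
Proof. by rewrite /laplace_w gdist_sym e_sym. Qed.

End GraphDistance.

(* On the diagonal both weights are the junk value [0 `^ (- s) = 0]. *)
Lemma mellin_w_le (R : realType) N (e : rel 'I_N) (s s' : R) i j :
  0 < s' -> s' < s -> mellin_w e s i j <= mellin_w e s' i j.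
Proof.
move=> s'0 s's; rewrite /mellin_w; case: (gdist e i j) => [|d].
  by rewrite powR0 ?powR_ge0 // oppr_eq0 gt_eqF // (lt_trans s'0).
by apply: ler_powR; [rewrite ler1n | rewrite lerN2 ltW].
Qed.

Lemma laplace_w_le (R : realType) N (e : rel 'I_N) (l l' : R) i j :
  0 < l' -> l' < l -> laplace_w e l i j <= laplace_w e l' i j.
Proof.
move=> l'0 l'l; rewrite /laplace_w; case: (e i j) => //.
by rewrite ler_expR lerN2 ler_wpM2r // ltW.
Qed.

Theorem lemma3 (R : realType) (N : nat) (e : rel 'I_N) :
  (2 <= N)%N -> simple_graph e -> connected_graph e ->
  (* Mellin case *)
  (forall (s s' : R) (ev ev' : seq R),
     0 < s' -> s' < s ->
     sorted_eigenvalues (wlaplacian (mellin_w e s)) ev ->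
     sorted_eigenvalues (wlaplacian (mellin_w e s')) ev' ->
     ev`_1 <= ev'`_1 /\ ev`_N.-1 <= ev'`_N.-1) /\
  (* Laplace case *)
  (forall (l l' : R) (ev ev' : seq R),
     0 < l' -> l' < l ->
     sorted_eigenvalues (wlaplacian (laplace_w e l)) ev ->
     sorted_eigenvalues (wlaplacian (laplace_w e l')) ev' ->
     ev`_1 <= ev'`_1 /\ ev`_N.-1 <= ev'`_N.-1).
Proof.
move=> N2 [e_sym _] _.
have ltN1N : (N.-1 < N)%N by rewrite prednK ?leqnn // ltnW.
split=> [s s' | l l'] ev ev' gt0 lt [sev cp] [sev' cp'].
  have le := wlaplacian_eigenvalues_le (mellin_w_sym e_sym s)
    (mellin_w_sym e_sym s') (fun i j => mellin_w_le e i j gt0 lt)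
    sev cp sev' cp'.
  by split; apply: le.
have le := wlaplacian_eigenvalues_le (laplace_w_sym e_sym l)
  (laplace_w_sym e_sym l') (fun i j => laplace_w_le e i j gt0 lt)
  sev cp sev' cp'.
by split; apply: le.
Qed.
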